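(* Let $a>1$ be a real number and let $G$ be a connected $(n,m)$-graph. If $G$ has maximum value of $SEI_a$ among all connected $(n,m)$-graphs, then the maximum vertex degree in $G$ is $n-1$.
   Context: All graphs are finite, simple, undirected and connected; an $(n,m)$-graph has $n$ vertices and $m$ edges. The variable sum exdeg index is $SEI_a(G)=\sum_{uv\in E(G)}(a^{d_u}+a^{d_v})$, where $d_u$ is the degree of vertex $u$. *)

From mathcomp Require Import all_boot all_order all_algebra.
Set Implicit Arguments. Unset Strict Implicit. Unset Printing Implicit Defensive.
Import Order.TTheory GRing.Theory Num.Theory.

Definition simple_graph (n : nat) (e : rel 'I_n) : Prop :=
  symmetric e /\ irreflexive e.

Definition connected_graph (n : nat) (e : rel 'I_n) : Prop :=
  forall u v : 'I_n, connect e u v.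

(* edge set: unordered pairs {u,v} represented by (u,v) with u < v *)
Definition edges (n : nat) (e : rel 'I_n) : {set 'I_n * 'I_n} :=
  [set p : 'I_n * 'I_n | (p.1 < p.2)%N && e p.1 p.2].

Definition num_edges (n : nat) (e : rel 'I_n) : nat := #|edges e|.

Definition deg (n : nat) (e : rel 'I_n) (v : 'I_n) : nat :=
  #|[set w | e v w]|.

Definition max_deg (n : nat) (e : rel 'I_n) : nat :=
  \max_(v : 'I_n) deg e v.

Local Open Scope ring_scope.

Definition SEI (R : realFieldType) (a : R) (n : nat) (e : rel 'I_n) : R :=
  \sum_(p in edges e) (a ^+ deg e p.1 + a ^+ deg e p.2).

Definition connected_nm_graph (n m : nat) (e : rel 'I_n) : Prop :=
  simple_graph e /\ connected_graph e /\ num_edges e = m.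
Arguments connected_nm_graph n m e : clear implicits.

(* Let v be a vertex of maximum degree and suppose some w is neither v nor a
   neighbour of v.  By connectivity some edge uw leaves the closed
   neighbourhood of v, with u a neighbour of v.  Sliding this edge to vw keeps
   the graph simple and connected with the same number of edges, raises the
   degree of v by one and lowers that of u by one.  As
   SEI_a = sum_x d_x a^(d_x), the index changes by
   phi(d_v + 1) - phi(d_v) - (phi(d_u) - phi(d_u - 1)) with phi(k) = k a^k,
   which is positive because the increments of phi are strictly increasing for
   a > 1 and d_u - 1 < d_v.  This contradicts maximality. *)
From mathcomp Require Import all_boot all_order all_algebra.
From mathcomp Require Import lra zify.
Set Implicit Arguments.
Unset Strict Implicit.
Unset Printing Implicit Defensive.
Import Order.TTheory GRing.Theory Num.Theory.
Local Open Scope ring_scope.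

Section Degrees.
Variables (n : nat) (e : rel 'I_n).
Hypothesis e_simple : simple_graph e.

Lemma sum_edges_deg (V : nmodType) (F : 'I_n -> V) :
  \sum_(p in edges e) (F p.1 + F p.2) = \sum_x F x *+ deg e x.
Proof.
have [esym eirr] := e_simple.
have -> : \sum_x F x *+ deg e x = \sum_(p | e p.1 p.2) F p.1.
  rewrite -(pair_big_dep xpredT (fun x y => e x y) (fun x y => F x)).
  apply: eq_bigr => x _; rewrite /deg -sumr_const.
  by apply: eq_bigl => y; rewrite inE.
rewrite [RHS](bigID (fun p : 'I_n * 'I_n => (p.1 < p.2)%N)) /= big_split /=.
congr (_ + _); first by apply: eq_bigl => p; rewrite /edges inE andbC.
have swap_inj : injective (fun p : 'I_n * 'I_n => (p.2, p.1)).
  by case=> ? ? [? ?] [-> ->].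
rewrite (reindex_inj swap_inj) /=.
apply: eq_bigl => -[x y] /=; rewrite /edges inE /= esym.
case: (ltngtP x y) => //=; rewrite ?andbF ?andbT //.
by move/val_inj ->; rewrite eirr.
Qed.

Lemma num_edges_double : (num_edges e).*2 = (\sum_x deg e x)%N.
Proof.
have := sum_edges_deg (fun _ => 1%N).
rewrite sumr_const -mulr_natr natn (eq_bigr _ (fun x _ => natn (deg e x))).
by move=> <-; rewrite -mul2n.
Qed.

Lemma SEI_deg (R : realFieldType) (a : R) :
  SEI a e = \sum_x (deg e x)%:R * a ^+ deg e x.
Proof.
rewrite /SEI (sum_edges_deg (fun x => a ^+ deg e x)).
by apply: eq_bigr => x _; rewrite mulr_natl.
Qed.

Lemma deg_le_pred x : (deg e x <= n.-1)%N.
Proof.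
rewrite -[X in (_ <= X.-1)%N](card_ord n) -(cardsC1 x).
apply/subset_leq_card/subsetP => y; rewrite !inE.
by apply: contraL => /eqP ->; rewrite e_simple.2.
Qed.

Lemma deg_lt_pred_non_neighbour x :
  (deg e x < n.-1)%N -> exists2 y, y != x & ~~ e x y.
Proof.
move=> deg_lt; apply/exists_inP; apply: contraLR deg_lt => /exists_inPn all_adj.
rewrite -leqNgt -[X in (X.-1 <= _)%N](card_ord n) -(cardsC1 x).
apply/subset_leq_card/subsetP => y; rewrite !inE => yx.
by have := all_adj y yx; rewrite negbK.
Qed.

End Degrees.

Lemma connect_crossing_edge (T : finType) (e : rel T) (S : pred T) x y :
  connect e x y -> S x -> ~~ S y -> exists x' y', [/\ S x', ~~ S y' & e x' y'].
Proof.
move/connectP=> [p e_p ->]; elim: p x e_p => /= [|z p IHp] x.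
  by move=> _ ->.
case/andP=> exz e_p Sx Sy; case Sz: (S z); first exact: (IHp z).
by exists x, z; rewrite Sz.
Qed.

Lemma exists_edge_leaving_closed_nbhd n (e : rel 'I_n) v :
  simple_graph e -> connected_graph e -> (deg e v < n.-1)%N ->
  exists u w, [/\ e v u, e u w, w != v & ~~ e v w].
Proof.
move=> [_ eirr] e_conn /deg_lt_pred_non_neighbour [w0 w0v nvw0].
pose N := [pred x | (x == v) || e v x].
have N_v : N v by rewrite /N /= eqxx.
have N'_w0 : ~~ N w0 by rewrite /N /= negb_or w0v.
have [u [w [Nu Nw euw]]] := connect_crossing_edge (e_conn v w0) N_v N'_w0.
move: Nw; rewrite /N /= negb_or => /andP[wv nvw].
exists u, w; split=> //.
by case/orP: Nu => // /eqP uv; move: nvw; rewrite -uv euw.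
Qed.

Lemma exdeg_increment_lt (R : realFieldType) (a : R) (k d : nat) :
  1 < a -> (k < d)%N ->
  k.+1%:R * a ^+ k.+1 - k%:R * a ^+ k < d.+1%:R * a ^+ d.+1 - d%:R * a ^+ d.
Proof.
move=> a_gt1 kd.
have ak_gt0 : 0 < a ^+ k by apply: exprn_gt0; lra.
have ak_le_ad : a ^+ k <= a ^+ d by apply: ler_weXn2l; [lra | exact: ltnW].
have kd_R : k%:R + 1 <= d%:R :> R by rewrite natr1 ler_nat.
have k_ge0 : 0 <= k%:R :> R by [].
rewrite !exprS -!natr1.
set A := a ^+ k in ak_gt0 ak_le_ad *; set B := a ^+ d in ak_le_ad *.
set K := k%:R in kd_R k_ge0 *; set D := d%:R in kd_R *.
(* the increment k -> (k + 1) a^(k+1) - k a^k equals a^k (k (a - 1) + a) *)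
have : 0 <= (B - A) * (D * (a - 1) + a) by apply: mulr_ge0; nra.
have : 0 < A * ((D - K) * (a - 1)) by apply: mulr_gt0 => //; apply: mulr_gt0; lra.
nra.
Qed.

Definition upair (T : eqType) (a b x y : T) : bool :=
  ((x == a) && (y == b)) || ((x == b) && (y == a)).

Definition slide_edge n (e : rel 'I_n) (u v w : 'I_n) : rel 'I_n :=
  fun x y => (e x y && ~~ upair u w x y) || upair v w x y.

Section SlideEdge.
Variables (n : nat) (e : rel 'I_n) (u v w : 'I_n).
Hypotheses (e_simple : simple_graph e) (evu : e v u) (euw : e u w).
Hypotheses (wv : w != v) (nvw : ~~ e v w).

Let f := slide_edge e u v w.

Let esym : symmetric e. Proof. by case: e_simple. Qed.
Let eirr : irreflexive e. Proof. by case: e_simple. Qed.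
Let uv : u != v. Proof. by apply: contraL evu => /eqP ->; rewrite eirr. Qed.
Let uw : u != w. Proof. by apply: contraL euw => /eqP ->; rewrite eirr. Qed.

Lemma slide_edge_simple : simple_graph f.
Proof.
split=> [x y | x].
  rewrite /f /slide_edge /upair esym.
  by case: (x == u) (y == w) (x == w) (y == u) (x == v) (y == v) => [] [] [] [] [] [].
rewrite /f /slide_edge eirr /upair /=; apply/negP.
by case/orP => /andP[/eqP-> /eqP wx]; move: wv; rewrite ?wx eqxx.
Qed.

Lemma slide_edge_connected : connected_graph e -> connected_graph f.
Proof.
move=> e_conn x y.
have f_sym := sym_connect_sym slide_edge_simple.1.
have fuv : connect f u v.
  apply: connect1; rewrite /f /slide_edge /upair esym evu eqxx (negbTE uw).
  by rewrite eq_sym (negbTE wv) andbF.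
have fvw : connect f v w by apply: connect1; rewrite /f /slide_edge /upair !eqxx orbT.
apply: (connect_sub _ (e_conn x y)) => {}x {}y exy.
case uwxy: (upair u w x y); last by apply: connect1; rewrite /f /slide_edge exy uwxy.
have fuw := connect_trans fuv fvw.
by case/orP: uwxy => /andP[/eqP -> /eqP ->]; rewrite // f_sym.
Qed.

Lemma deg_slide_edge_v : deg f v = (deg e v).+1.
Proof.
rewrite /deg; have -> : [set y | f v y] = w |: [set y | e v y].
  apply/setP => y; rewrite !inE /f /slide_edge /upair eqxx.
  rewrite (eq_sym v u) (negbTE uv) (eq_sym v w) (negbTE wv) /=.
  by rewrite andbT orbF orbC.
by rewrite cardsU1 inE nvw.
Qed.

Lemma deg_slide_edge_u : deg e u = (deg f u).+1.
Proof.
rewrite /deg; have -> : [set y | f u y] = [set y | e u y] :\ w.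
  apply/setP => y; rewrite !inE /f /slide_edge /upair eqxx (negbTE uv) (negbTE uw) /=.
  by rewrite !orbF andbC.
by rewrite (cardsD1 w [set y | e u y]) inE euw.
Qed.

Lemma deg_slide_edge_other x : x != u -> x != v -> deg f x = deg e x.
Proof.
move=> xu xv; case: (eqVneq x w) => [-> | xw].
  rewrite /deg; have -> : [set y | f w y] = v |: ([set y | e w y] :\ u).
    apply/setP => y; rewrite !inE /f /slide_edge /upair eqxx.
    by rewrite (eq_sym w u) (negbTE uw) (negbTE wv) /= orbC andbC.
  rewrite cardsU1 !inE esym (negbTE nvw) andbF /=.
  by rewrite (cardsD1 u [set y | e w y]) inE esym euw.
rewrite /deg; congr #|pred_of_set _|; apply/setP => y.
by rewrite !inE /f /slide_edge /upair (negbTE xu) (negbTE xv) (negbTE xw) /= andbT orbF.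
Qed.

Lemma sum_deg_slide_edge (V : nmodType) (F : nat -> V) :
  \sum_x F (deg f x) + (F (deg e v) + F (deg e u))
  = \sum_x F (deg e x) + (F (deg f v) + F (deg f u)).
Proof.
have split_uv (d : 'I_n -> nat) : \sum_x F (d x)
    = F (d v) + F (d u) + \sum_(x | (x != v) && (x != u)) F (d x).
  by rewrite (bigD1 v) //= (bigD1 u) //= addrA.
rewrite !split_uv (eq_bigr (fun x => F (deg e x))); last first.
  by move=> x /andP[xv xu]; rewrite deg_slide_edge_other.
set S := \sum_(x | _) _; set Af := F (deg f v) + _; set Be := F (deg e v) + _.
by rewrite addrAC [RHS]addrC addrA.
Qed.

Lemma num_edges_slide_edge : num_edges f = num_edges e.
Proof.
have := sum_deg_slide_edge id.
rewrite /= deg_slide_edge_v deg_slide_edge_u -!(num_edges_double e_simple).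
rewrite -(num_edges_double slide_edge_simple); lia.
Qed.

Lemma SEI_slide_edge_gt (R : realFieldType) (a : R) :
  1 < a -> (deg e u <= deg e v)%N -> SEI a e < SEI a f.
Proof.
move=> a_gt1 deg_uv.
have := sum_deg_slide_edge (fun k => k%:R * a ^+ k : R).
rewrite -(SEI_deg e_simple) -(SEI_deg slide_edge_simple).
rewrite deg_slide_edge_v deg_slide_edge_u.
have := @exdeg_increment_lt R a (deg f u) (deg e v) a_gt1.
rewrite -deg_slide_edge_u => /(_ deg_uv); lra.
Qed.

End SlideEdge.

Theorem corollary5 (R : realFieldType) (a : R) (n m : nat) (e : rel 'I_n) :
  1 < a ->
  connected_nm_graph n m e ->
  (forall f : rel 'I_n, connected_nm_graph n m f -> SEI a f <= SEI a e) ->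
  max_deg e = (n - 1)%N.
Proof.
move=> a_gt1 [e_simple [e_conn e_m]] e_max.
case: n e e_simple e_conn e_m e_max => [|n] e e_simple e_conn e_m e_max.
  by rewrite /max_deg big_ord0.
have [v max_v] : {v | max_deg e = deg e v} by apply: bigop.eq_bigmax; rewrite card_ord.
rewrite max_v subn1; apply/eqP.
rewrite eqn_leq (deg_le_pred e_simple) leqNgt; apply/negP => deg_v_lt.
have [u [w [evu euw wv nvw]]] :=
  exists_edge_leaving_closed_nbhd e_simple e_conn deg_v_lt.
have f_nm : connected_nm_graph n.+1 m (slide_edge e u v w).
  split; first exact: slide_edge_simple.
  split; first exact: slide_edge_connected.
  by rewrite num_edges_slide_edge.
have deg_uv : (deg e u <= deg e v)%N by rewrite -max_v leq_bigmax.
have := SEI_slide_edge_gt e_simple evu euw wv nvw a_gt1 deg_uv.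
by rewrite ltNge e_max.
Qed.
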